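(* There exists an invertible $19\times19$ binary matrix such that the corresponding linear kernel has partial distance sequence $(1,2,2,2,2,2,4,4,4,4,4,6,8,8,8,8,8,8,16)$. Consequently $E_{19}\ge\frac1{19}\sum_{i=0}^{18}\log_{19}D_{min}^{(i)}\approx0.49045$.
   Context: A kernel of dimension $\ell$ is a bijection $g:\{0,1\}^\ell\to\{0,1\}^\ell$; a linear kernel is $g({\bf u})={\bf u}G$ over $\mathbb{F}_2$ for an invertible $\ell\times\ell$ binary matrix $G$. ${\bf a}\bullet{\bf b}$ denotes concatenation, $d_H$ Hamming distance. Partial distances: $D_{min}^{(i)}=\min\{d_H(g({\bf w}\bullet 0\bullet{\bf u}),g({\bf w}\bullet 1\bullet {\bf v})) : {\bf w}\in\{0,1\}^i,\ {\bf u},{\bf v}\in\{0,1\}^{\ell-i-1}\}$, $i=0,\dots,\ell-1$; exponent $E(g)=\frac1\ell\sum_{i}\log_\ell D_{min}^{(i)}$; $E_\ell=\max_g E(g)$ over all kernels of dimension $\ell$. *)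

From Stdlib Require Import Reals.
From mathcomp Require Import all_boot all_order all_algebra all_fingroup.
Local Open Scope nat_scope.
Set Implicit Arguments. Unset Strict Implicit. Unset Printing Implicit Defensive.

Definition dH (l : nat) (x y : 'rV['F_2]_l) : nat := #|[set j | x ord0 j != y ord0 j]|.

Definition kernel (l : nat) := {perm 'rV['F_2]_l}.

Definition linker (l : nat) (G : 'M['F_2]_l) : 'rV['F_2]_l -> 'rV['F_2]_l :=
  fun u => mulmx u G.

(* x = w . 0 . u and y = w . 1 . v for some w of length i (and arbitrary u, v):
   x, y agree on positions < i, x_i = 0, y_i = 1. *)
Definition split_pair (l : nat) (i : 'I_l) (x y : 'rV['F_2]_l) : bool :=
  [forall j : 'I_l, (j < i)%N ==> (x ord0 j == y ord0 j)] && (x ord0 i == 0%R) && (y ord0 i == 1%R).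

(* Partial distance D_min^(i) of g.  The minimum is taken with initial value l,
   which does not change it since all Hamming distances are <= l and the
   range of (x,y) is nonempty. *)
Definition Dmin (l : nat) (g : 'rV['F_2]_l -> 'rV['F_2]_l) (i : 'I_l) : nat :=
  \big[minn/l]_(x : 'rV['F_2]_l) \big[minn/l]_(y : 'rV['F_2]_l | split_pair i x y)
     dH (g x) (g y).

Definition Rsum_ord (l : nat) (f : 'I_l -> R) : R :=
  foldr Rplus R0 (map f (enum 'I_l)).

Definition logb (l : nat) (x : R) : R := Rdiv (ln x) (ln (INR l)).

Definition exponent (l : nat) (g : 'rV['F_2]_l -> 'rV['F_2]_l) : R :=
  Rmult (Rinv (INR l)) (Rsum_ord (fun i : 'I_l => logb l (INR (Dmin g i)))).

(* E_l = max over all kernels of dimension l (finite, nonempty; each E(g) >= 0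
   since D_min >= 1 for a bijection, so initial value 0 is harmless). *)
Definition Emax (l : nat) : R :=
  foldr Rmax R0 (map (fun g : kernel l => exponent (fun u => g u)) (enum (kernel l))).

From Stdlib Require Import Reals.
From mathcomp Require Import all_boot all_order all_algebra all_fingroup.
Import GRing.Theory Order.TTheory.
Set Implicit Arguments.
Unset Strict Implicit.
Unset Printing Implicit Defensive.
Local Open Scope ring_scope.

(* For a linear kernel u |-> uG, the difference of two vectors w.0.u and w.1.v
   is a vector whose first nonzero entry is at position i, so by linearity
   D_min^(i) is the minimum Hamming weight of the coset
   g_i + <g_(i+1), ..., g_(l-1)> of the rows of G.  For the explicit matrix
   below these 19 minima are computed exhaustively.  Since they are all
   positive, no nonzero vector is mapped to 0, so G is invertible and defines a
   kernel, whose exponent is a lower bound for E_19. *)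

Lemma F2_cases (x : 'F_2) : x = 0 \/ x = 1.
Proof. by case: x => -[|[|//]] ?; [left | right]; apply: val_inj. Qed.

Section Weight.
Variable l : nat.
Implicit Types (x y v : 'rV['F_2]_l).

Definition wt v : nat := #|[set j | v ord0 j != 0]|.

Lemma wt0 : wt 0 = 0%N.
Proof. by apply/eqP; rewrite cards_eq0; apply/eqP/setP => j; rewrite !inE mxE eqxx. Qed.

Lemma dH_wt x y : dH x y = wt (y - x).
Proof. by apply: eq_card => j; rewrite !inE !mxE subr_eq0 eq_sym. Qed.

Lemma dH_le x y : (dH x y <= l)%N.
Proof. by rewrite -[l in (_ <= l)%N]card_ord max_card. Qed.

(* Over F_2 an element of a + span rs is a plus the sum of a subset of rs. *)
Fixpoint min_wt_coset (a : 'rV['F_2]_l) (rs : seq 'rV['F_2]_l) : nat :=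
  if rs is r :: rs' then minn (min_wt_coset a rs') (min_wt_coset (a + r) rs')
  else wt a.

Lemma min_wt_coset_le (I : Type) (s : seq I) (f : I -> 'rV['F_2]_l) (c : I -> 'F_2) a :
  (min_wt_coset a (map f s) <= wt (a + \sum_(k <- s) c k *: f k))%N.
Proof.
elim: s a => [|k s IHs] a /=; first by rewrite big_nil addr0.
rewrite big_cons; case: (F2_cases (c k)) => ->.
- by rewrite scale0r add0r; apply: leq_trans (geq_minl _ _) (IHs a).
- by rewrite scale1r addrA; apply: leq_trans (geq_minr _ _) (IHs (a + f k)).
Qed.

Lemma min_wt_coset_attained (I : eqType) (s : seq I) (f : I -> 'rV['F_2]_l) a :
  uniq s -> exists c : I -> 'F_2, wt (a + \sum_(k <- s) c k *: f k) = min_wt_coset a (map f s).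
Proof.
elim: s a => [|k s IHs] a /=; first by exists (fun=> 0); rewrite big_nil addr0.
case/andP=> k_notin_s uniq_s.
have set_k (c : I -> 'F_2) b :
    \sum_(j <- s) (if j == k then b else c j) *: f j = \sum_(j <- s) c j *: f j.
  by apply: eq_big_seq => j j_in_s; case: eqP j_in_s k_notin_s => // -> ->.
(* leqP also replaces the minn in the goal by the smaller branch. *)
have [_ | _] := leqP (min_wt_coset a (map f s)) (min_wt_coset (a + f k) (map f s)).
- have [c wt_c] := IHs a uniq_s.
  exists (fun j => if j == k then 0 else c j).
  by rewrite big_cons eqxx scale0r add0r set_k wt_c.
- have [c wt_c] := IHs (a + f k) uniq_s.
  exists (fun j => if j == k then 1 else c j).
  by rewrite big_cons eqxx scale1r addrA set_k wt_c.
Qed.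

End Weight.

Section LinearKernel.
Variables (l : nat) (G : 'M['F_2]_l).
Implicit Types (i : 'I_l) (x y z : 'rV['F_2]_l).

Definition later i : seq 'I_l := [seq k : 'I_l <- enum 'I_l | (i < k)%N].

Definition leads_at i z : Prop :=
  z ord0 i = 1 /\ forall j : 'I_l, (j < i)%N -> z ord0 j = 0.

Definition coset_wt i : nat := min_wt_coset (row i G) [seq row k G | k <- later i].

Lemma mulmx_leads_at i z : leads_at i z ->
  z *m G = row i G + \sum_(k <- later i) z ord0 k *: row k G.
Proof.
case=> z_i z_lt; rewrite mulmx_sum_row (bigID (fun k : 'I_l => (i < k)%N)) /= addrC.
rewrite /later big_filter big_enum_cond; congr (_ + _).
rewrite (bigD1 i) ?ltnn //= z_i scale1r big1 ?addr0 // => j /andP [j_le_i j_neq_i].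
by rewrite z_lt ?scale0r // ltn_neqAle leqNgt j_le_i andbT.
Qed.

Lemma coset_wt_le i z : leads_at i z -> (coset_wt i <= wt (z *m G))%N.
Proof. by move/mulmx_leads_at->; apply: min_wt_coset_le. Qed.

Lemma coset_wt_attained i : exists2 z, leads_at i z & wt (z *m G) = coset_wt i.
Proof.
have [c wt_c] := min_wt_coset_attained (fun k => row k G) (row i G)
  (filter_uniq (fun k : 'I_l => (i < k)%N) (enum_uniq 'I_l)).
pose z : 'rV['F_2]_l := \row_k (if k == i then 1 else if (i < k)%N then c k else 0).
have z_lead : leads_at i z.
  split=> [|j j_lt_i]; rewrite mxE ?eqxx //.
  by rewrite -val_eqE (ltn_eqF j_lt_i) ltnNge ltnW.
exists z => //; rewrite (mulmx_leads_at z_lead) /coset_wt -wt_c; congr (wt (_ + _)).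
apply: eq_big_seq => k; rewrite mem_filter mxE => /andP [i_lt_k _].
by rewrite -val_eqE i_lt_k gtn_eqF.
Qed.

Lemma split_pair_leads_at i x y : split_pair i x y -> leads_at i (y - x).
Proof.
case/andP=> /andP [/forallP x_eq_y /eqP x_i] /eqP y_i.
split=> [|j j_lt_i]; rewrite !mxE ?x_i ?y_i ?subr0 //.
by move/implyP/(_ j_lt_i)/eqP: (x_eq_y j) ->; rewrite subrr.
Qed.

Lemma leads_at_split_pair i z : leads_at i z -> split_pair i 0 z.
Proof.
case=> z_i z_lt; rewrite /split_pair !mxE z_i !eqxx !andbT.
by apply/forallP => j; apply/implyP => /z_lt ->; rewrite mxE.
Qed.

Lemma Dmin_linker i : Dmin (linker G) i = coset_wt i.
Proof.
have [z z_lead wt_z] := coset_wt_attained i.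
have wt_le_l : (coset_wt i <= l)%N by rewrite -wt_z -[z *m G]subr0 -dH_wt dH_le.
apply/eqP; rewrite eqn_leq /Dmin -minEnat -!leEnat; apply/andP; split.
  apply: le_trans (bigmin_le _ 0 _) _.
  apply: le_trans (bigmin_le_cond _ _ (leads_at_split_pair z_lead)) _.
  by rewrite dH_wt /linker mul0mx subr0 wt_z.
apply: le_bigmin => [|x _]; first by rewrite leEnat.
apply: le_bigmin => [|y xy_split]; first by rewrite leEnat.
by rewrite dH_wt /linker -mulmxBl leEnat coset_wt_le //; apply: split_pair_leads_at.
Qed.

End LinearKernel.

Lemma leads_at_first_nonzero l (v : 'rV['F_2]_l) : v != 0 -> exists i, leads_at i v.
Proof.
move=> v_neq0; have [j0 v_j0] : exists j, v ord0 j != 0.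
  apply/existsP; apply: contraR v_neq0 => /existsPn v0.
  by apply/eqP/rowP => j; rewrite mxE; apply/eqP/negPn/v0.
have [i v_i i_min] := arg_minnP (P := fun j => v ord0 j != 0) val v_j0.
exists i; split; first by case: (F2_cases (v ord0 i)) v_i => -> //; rewrite eqxx.
by move=> j j_lt_i; apply/eqP; apply: contraTT j_lt_i => v_j; rewrite -leqNgt (i_min j v_j).
Qed.

Lemma unitmx_of_coset_wt_gt0 l (G : 'M['F_2]_l) :
  (forall i, 0 < coset_wt G i)%N -> G \in unitmx.
Proof.
move=> coset_wt_gt0; rewrite -row_free_unit; apply: inj_row_free => v vG0.
apply/eqP; apply: contraT => /leads_at_first_nonzero [i /(coset_wt_le G)].
by rewrite vG0 wt0 leqn0 => /eqP wt_eq0; move: (coset_wt_gt0 i); rewrite wt_eq0.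
Qed.

Lemma eq_exponent l (g1 g2 : 'rV['F_2]_l -> 'rV['F_2]_l) :
  g1 =1 g2 -> exponent g1 = exponent g2.
Proof.
move=> eq_g; congr (Rmult _ (foldr _ _ _)); apply: eq_map => i.
congr (logb _ (INR _)); rewrite /Dmin.
by do 2![apply: eq_bigr => ? _]; rewrite !eq_g.
Qed.

Lemma exponent_le_Emax l (g : kernel l) : Rle (exponent (fun u => g u)) (Emax l).
Proof.
rewrite /Emax; have : g \in enum (kernel l) by rewrite mem_enum.
elim: (enum _) => //= g' s IHs; rewrite inE => /orP [/eqP <- | g_in_s].
  exact: Rmax_l.
exact: Rle_trans (IHs g_in_s) (Rmax_r _ _).
Qed.

Lemma exponent_linker_le_Emax l (G : 'M['F_2]_l) :
  G \in unitmx -> Rle (exponent (linker G)) (Emax l).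
Proof.
move=> G_unit; pose g : kernel l := perm (can_inj (mulmxK G_unit)).
rewrite (@eq_exponent _ _ (fun u => g u)); first exact: exponent_le_Emax.
by move=> u; rewrite permE.
Qed.

Definition bitF2 (b : bool) : 'F_2 := b%:R.

Lemma bitF2_eq0 b : (bitF2 b == 0) = ~~ b.
Proof. by case: b. Qed.

Lemma bitF2_xor a b : bitF2 (a (+) b) = bitF2 a + bitF2 b.
Proof. by case: a; case: b; apply: val_inj. Qed.

Definition row_of_bits l (a : seq bool) : 'rV['F_2]_l := \row_j bitF2 (nth false a j).

Fixpoint xor_bits (a b : seq bool) : seq bool :=
  match a, b with
  | x :: a', y :: b' => (x (+) y) :: xor_bits a' b'
  | [::], _ => b
  | _, [::] => a
  end.

(* A copy of min_wt_coset on bit lists, cheap enough for vm_compute. *)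
Fixpoint min_wt_bits (a : seq bool) (rs : seq (seq bool)) : nat :=
  if rs is r :: rs' then minn (min_wt_bits a rs') (min_wt_bits (xor_bits a r) rs')
  else count id a.

Lemma nth_xor_bits a b j : nth false (xor_bits a b) j = nth false a j (+) nth false b j.
Proof. by elim: a b j => [|x a IHa] [|y b] [|j] //=; rewrite ?addbF. Qed.

Lemma size_xor_bits a b : size a = size b -> size (xor_bits a b) = size a.
Proof. by elim: a b => [|x a IHa] [|y b] //= [] /IHa ->. Qed.

Lemma row_of_bits_xor l a b :
  row_of_bits l (xor_bits a b) = row_of_bits l a + row_of_bits l b.
Proof. by apply/rowP => j; rewrite !mxE nth_xor_bits bitF2_xor. Qed.

Lemma wt_row_of_bits l a : size a = l -> wt (row_of_bits l a) = count id a.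
Proof.
move=> <-; rewrite /wt cardsE cardE /enum_mem size_filter -enumT.
rewrite -[in RHS](mkseq_nth false a) /mkseq -val_enum_ord -map_comp count_map.
by apply: eq_count => j; rewrite /= unfold_in mxE bitF2_eq0 negbK.
Qed.

Lemma min_wt_coset_bits l a rs : size a = l -> all (fun r => size r == l) rs ->
  min_wt_coset (row_of_bits l a) [seq row_of_bits l r | r <- rs] = min_wt_bits a rs.
Proof.
elim: rs a => [|r rs IHrs] a size_a /=; first by move=> _; apply: wt_row_of_bits.
case/andP=> /eqP size_r size_rs; rewrite -row_of_bits_xor !IHrs //.
by rewrite size_xor_bits // size_a size_r.
Qed.

Definition bits19 : seq (seq bool) := [::
  [:: true; true; false; false; false; false; true; true; false; false; true; false; false; false; true; true; true; false; true];
  [:: false; false; false; false; true; true; true; false; true; false; true; true; true; false; true; false; false; false; false];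
  [:: false; true; false; true; false; true; true; true; true; true; false; false; false; false; false; false; true; false; false];
  [:: false; false; true; false; false; false; false; true; true; true; false; false; false; true; false; true; true; true; false];
  [:: false; true; false; true; false; false; true; false; false; true; false; false; false; true; false; true; true; true; false];
  [:: true; false; true; false; true; false; true; true; true; true; true; false; false; false; true; true; true; true; false];
  [:: true; true; true; true; false; false; false; true; true; false; true; true; false; true; true; false; true; true; false];
  [:: false; false; false; true; false; false; true; false; true; true; false; true; true; true; false; true; true; true; false];
  [:: true; false; true; false; false; true; false; false; true; true; false; false; false; true; true; false; true; true; true];
  [:: false; true; true; false; false; false; true; false; false; false; true; false; false; true; false; true; true; true; false];
  [:: false; true; false; true; false; true; false; true; false; true; true; false; true; true; false; false; true; false; true];
  [:: true; false; false; true; false; false; true; false; false; true; false; true; false; false; false; true; true; false; true];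
  [:: true; false; false; false; true; true; true; false; true; false; false; false; true; true; false; true; false; false; false];
  [:: true; false; true; true; true; false; true; true; true; false; true; false; true; false; false; true; false; true; true];
  [:: false; false; false; false; false; true; true; true; true; true; false; false; true; false; true; false; true; false; false];
  [:: true; true; false; true; false; true; false; true; false; false; false; true; false; true; true; true; true; true; true];
  [:: false; false; false; true; true; false; true; true; false; true; true; false; false; false; false; false; true; false; true];
  [:: true; true; false; true; false; true; true; true; true; false; true; false; true; true; true; false; false; true; false];
  [:: true; true; true; true; true; true; true; true; false; true; true; true; true; true; false; false; true; true; true]].

Definition G19 : 'M['F_2]_19 := \matrix_(i, j) bitF2 (nth false (nth [::] bits19 i) j).

Definition partial_distances19 : seq nat :=
  [:: 1; 2; 2; 2; 2; 2; 4; 4; 4; 4; 4; 6; 8; 8; 8; 8; 8; 8; 16]%N.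

Lemma bits19_min_wts :
  [&& size bits19 == 19, all (fun r => size r == 19) bits19 &
      [seq min_wt_bits (nth [::] bits19 i) [seq nth [::] bits19 k | k <- iota 0 19 & (i < k)%N]
      | i <- iota 0 19] == partial_distances19].
Proof. by vm_compute. Qed.

Lemma coset_wt_G19 i : coset_wt G19 i = nth 0%N partial_distances19 i.
Proof.
case/and3P: bits19_min_wts => /eqP size_bits /allP size_rows /eqP <-.
rewrite (nth_map 0%N) ?size_iota // nth_iota // add0n.
set rs := [seq nth [::] bits19 k | k <- _].
have rows_later : [seq row k G19 | k <- later i] = [seq row_of_bits 19 r | r <- rs].
  rewrite /rs /later -val_enum_ord filter_map -!map_comp.
  by apply: eq_map => k; apply/rowP => j; rewrite !mxE.
have row_i : row i G19 = row_of_bits 19 (nth [::] bits19 i) by apply/rowP => j; rewrite !mxE.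
have size_nth k : (k < 19)%N -> size (nth [::] bits19 k) = 19%N.
  by move=> k_lt; apply/eqP/size_rows; rewrite mem_nth ?size_bits.
rewrite /coset_wt rows_later row_i min_wt_coset_bits ?size_nth //.
by apply/allP => r /mapP [k]; rewrite mem_filter mem_iota => /andP [_ k_lt] ->; rewrite size_nth.
Qed.

Local Close Scope ring_scope.

Theorem mainTheorem17 :
  let ds := [:: 1; 2; 2; 2; 2; 2; 4; 4; 4; 4; 4; 6; 8; 8; 8; 8; 8; 8; 16]%N in
  (exists G : 'M['F_2]_19,
      G \in unitmx /\ forall i : 'I_19, Dmin (linker G) i = nth 0%N ds i)
  /\ Rle (Rmult (Rinv (INR 19)) (Rsum_ord (fun i : 'I_19 => logb 19 (INR (nth 0%N ds i)))))
         (Emax 19).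
Proof.
move=> ds.
have Dmin_G19 i : Dmin (linker G19) i = nth 0 ds i by rewrite Dmin_linker coset_wt_G19.
have G19_unit : G19 \in unitmx.
  apply: unitmx_of_coset_wt_gt0 => i; rewrite coset_wt_G19.
  by apply: (allP (isT : all (leq 1) ds)); rewrite mem_nth.
split; first by exists G19.
apply: Rle_trans (exponent_linker_le_Emax G19_unit); right.
by congr (Rmult _ (foldr _ _ _)); apply: eq_map => i; rewrite Dmin_G19.
Qed.
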